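(* Let $\mathbb{F}$ be a finite field. For every $k,m,r\in\mathbb{N}$ there exists $n\in\mathbb{N}$ such that for every $c:M^k_{n,k}(\mathbb{F})\to r$ there is $R\in\mathcal{E}_{n,m}(\mathbb{F})$ such that $\tau$ is a factor of $c$ on $R\cdot M^k_{m,k}(\mathbb{F})$, i.e. there is $\widehat{c}:\mathrm{GL}(\mathbb{F}^k)\to r$ with $c(R\cdot A)=\widehat{c}(\tau(R\cdot A))$ for every $A\in M^k_{m,k}(\mathbb{F})$.
   Context: $r$ is identified with $\{0,\dots,r-1\}$. $M^k_{n,m}(\mathbb{F})$ is the set of $n\times m$ matrices over $\mathbb{F}$ of rank $k$. $(u_i)$ denotes the unit vector basis. A $p\times q$ matrix $A$ is in reduced row echelon form (RREF) if there are $p_0\le p$ and a strictly increasing sequence $j_0<\dots<j_{p_0-1}<q$ such that $A u_{j_i}=u_i$ and $\langle A u_j\rangle_{j<j_i}=\langle u_l\rangle_{l<i}$ for every $i<p_0$; $A$ is in reduced column echelon form (RCEF) if its transpose is in RREF. $\mathcal{E}_{n,m}(\mathbb{F})$ is the set of $n\times m$ matrices of rank $m$ in RCEF. $\tau:M^k_{n,k}(\mathbb{F})\to\mathrm{GL}(\mathbb{F}^k)$ assigns to $A$ the unique invertible $k\times k$ matrix $\tau(A)$ such that $A\cdot\tau(A)$ is in RCEF. *)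

From HB Require Import structures.
From mathcomp Require Import all_boot all_order all_algebra.
Set Implicit Arguments. Unset Strict Implicit. Unset Printing Implicit Defensive.
Import GRing.Theory.
Local Open Scope ring_scope.

Section Echelon.
Variable F : fieldType.

(* A q x p matrix whose row space
   is the span of the columns A u_j, j < t, of A (columns written as rows). *)
Definition colspan_lt (p q : nat) (A : 'M[F]_(p, q)) (t : nat) : 'M[F]_(q, p) :=
  \matrix_(j < q) (if (j < t)%N then row j A^T else 0).

(* Reduced row echelon form, following the paper: there are p0 <= p and a
   strictly increasing j_0 < ... < j_{p0-1} < q with A u_{j_i} = u_i and
   <A u_j>_{j < j_i} = <u_l>_{l < i} for i < p0; additionally (standard
   convention, implicit in the paper) all columns lie in <u_l>_{l < p0},
   i.e. rows p0,...,p-1 are zero. *)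
Definition is_rref (p q : nat) (A : 'M[F]_(p, q)) : bool :=
  [exists p0 : 'I_p.+1, exists j : {ffun 'I_p -> 'I_q},
    [&& [forall i1 : 'I_p, forall i2 : 'I_p,
           ((i1 < i2)%N && (i2 < p0)%N) ==> (j i1 < j i2)%N],
        [forall i : 'I_p, (i < p0)%N ==>
           ((col (j i) A == delta_mx i (0 : 'I_1)) &&
            (colspan_lt A (j i) == (pid_mx i : 'M[F]_p))%MS)]
      & (A^T == (pid_mx p0 : 'M[F]_p))%MS]].

Definition is_rcef (p q : nat) (A : 'M[F]_(p, q)) : bool := is_rref A^T.

Definition in_E (n m : nat) (R : 'M[F]_(n, m)) : bool :=
  (\rank R == m) && is_rcef R.
End Echelon.

(* tau(A): the (unique, for A of rank k) invertible k x k matrix T with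
   A *m T in RCEF; picked from the finite type of matrices. *)
Definition tau (F : finFieldType) (n k : nat) (A : 'M[F]_(n, k)) : 'M[F]_k :=
  match [pick T : 'M[F]_k | (T \in unitmx) && is_rcef (A *m T)] with
  | Some T => T
  | None => 1%:M
  end.

From HB Require Import structures.
From mathcomp Require Import all_boot all_order all_algebra.
From mathcomp Require Import zify perm.
Set Implicit Arguments. Unset Strict Implicit. Unset Printing Implicit Defensive.
Import GRing.Theory.

(* Call a matrix echelon if it has full column rank and is in reduced column
   echelon form.  A rank-k matrix A factors uniquely as A = E G with E echelon
   and G invertible, and then tau(A) = G^-1.  The theorem is therefore the
   Ramsey property of echelon matrices (Graham-Leeb-Rothschild) for the
   colouring E |-> (T |-> c(E T)): if R E has colour c0 for every echelon E,
   then c(R E G) = c0(G) = c0(tau(R E G)^-1).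

   The Ramsey property is proved by induction on the number k of columns.  For
   k + 1 columns one first finds R such that the colour of R X only depends on
   the row of the last pivot of X; this is an induction on the number of rows
   of X, where the Ramsey property for k columns handles X whose last row is a
   pivot row, and the Hales-Jewett theorem over the alphabet of row vectors
   absorbs the otherwise arbitrary last row of X.  The pigeonhole principle
   then restricts R to columns on which this last-pivot colour is constant. *)

Definition line (A : Type) n (w : {ffun 'I_n -> A}) (S : {set 'I_n}) (a : A) :
    {ffun 'I_n -> A} :=
  [ffun i => if i \in S then a else w i].

Definition monochromatic_line (A : Type) (C : eqType) n (Phi : {ffun 'I_n -> A} -> C) :=
  exists w S, S != set0 /\ forall a b, Phi (line w S a) = Phi (line w S b).

Definition hales_jewett (A C : finType) :=
  exists n, forall Phi : {ffun 'I_n -> A} -> C, monochromatic_line Phi.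

Lemma line_set0 (A : Type) n (w : {ffun 'I_n -> A}) a : line w set0 a = w.
Proof. by apply/ffunP=> i; rewrite ffunE inE. Qed.

Definition cat_word (A : Type) n1 n2 (u : {ffun 'I_n1 -> A}) (v : {ffun 'I_n2 -> A}) :
    {ffun 'I_(n1 + n2) -> A} :=
  [ffun i => match split i with inl i1 => u i1 | inr i2 => v i2 end].

Definition cat_set n1 n2 (S1 : {set 'I_n1}) (S2 : {set 'I_n2}) : {set 'I_(n1 + n2)} :=
  [set i | match split i with inl i1 => i1 \in S1 | inr i2 => i2 \in S2 end].

Lemma line_cat (A : Type) n1 n2 (u : {ffun 'I_n1 -> A}) (v : {ffun 'I_n2 -> A}) S1 S2 a :
  line (cat_word u v) (cat_set S1 S2) a = cat_word (line u S1 a) (line v S2 a).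
Proof. by apply/ffunP=> i; rewrite !ffunE inE; case: split => j; rewrite ffunE. Qed.

Lemma cat_set_eq0 n1 n2 (S1 : {set 'I_n1}) (S2 : {set 'I_n2}) :
  (cat_set S1 S2 == set0) = (S1 == set0) && (S2 == set0).
Proof.
apply/eqP/andP => [S0|[/eqP-> /eqP->]]; last first.
  by apply/setP=> i; rewrite !inE; case: split => j; rewrite inE.
split; apply/eqP/setP=> j; rewrite inE.
  by move/setP/(_ (lshift n2 j)): S0; rewrite !inE (unsplitK (inl _ j)).
by move/setP/(_ (rshift n1 j)): S0; rewrite !inE (unsplitK (inr _ j)).
Qed.

Lemma monochromatic_cat_word (A : Type) (C : eqType) n1 n2 (v : {ffun 'I_n2 -> A})
    (Phi : {ffun 'I_(n1 + n2) -> A} -> C) :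
  monochromatic_line (fun u => Phi (cat_word u v)) -> monochromatic_line Phi.
Proof.
case=> w [S [S0 mono]]; exists (cat_word w v), (cat_set S set0).
by rewrite cat_set_eq0 (negbTE S0); split=> // a b; rewrite !line_cat !line_set0.
Qed.

Lemma hales_jewett_surj (A B C : finType) (g : A -> B) (h : B -> A) :
  cancel h g -> hales_jewett A C -> hales_jewett B C.
Proof.
move=> hK [n hjA]; exists n => Phi.
have [w [S [S0 mono]]] := hjA (fun u => Phi [ffun i => g (u i)]).
exists [ffun i => g (w i)], S; split=> // a b.
have lineE c : line [ffun i => g (w i)] S c = [ffun i => g (line w S (h c) i)].
  by apply/ffunP=> i; rewrite !ffunE; case: (i \in S); rewrite ?hK ?ffunE.
by rewrite !lineE; apply: mono.
Qed.

Section OptionStep.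

Variables (A : finType) (a0 : A).
Hypothesis hjA : forall C : finType, hales_jewett A C.

Definition some_word n (v : {ffun 'I_n -> A}) : {ffun 'I_n -> option A} :=
  [ffun i => Some (v i)].

Lemma line_some_word n (w : {ffun 'I_n -> A}) S a :
  line (some_word w) S (Some a) = some_word (line w S a).
Proof. by apply/ffunP=> i; rewrite !ffunE; case: (i \in S). Qed.

Definition focused (C : eqType) (I : Type) n (Phi : {ffun 'I_n -> option A} -> C)
    (f : {ffun 'I_n -> option A}) (col : I -> C) :=
  exists (W : I -> {ffun 'I_n -> option A}) (Ss : I -> {set 'I_n}),
    [/\ forall i, Ss i != set0, forall i, line (W i) (Ss i) None = f
      & forall i a, Phi (line (W i) (Ss i) (Some a)) = col i].

Lemma focused_monochromatic (C : eqType) (I : Type) n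
    (Phi : {ffun 'I_n -> option A} -> C) f (col : I -> C) :
  focused Phi f col -> (exists i, Phi f = col i) -> monochromatic_line Phi.
Proof.
case=> W [Ss [Ss0 lineNone lineSome]] [i Phif]; exists (W i), (Ss i); split=> //.
suff lineE b : Phi (line (W i) (Ss i) b) = col i by move=> a b; rewrite !lineE.
by case: b => [a|]; rewrite ?lineSome ?lineNone.
Qed.

(* Colour focusing: Hales-Jewett over [A] in the last [n2] coordinates, with the
   induced colourings of the first [n1] coordinates as colours, makes [Phi]
   blind to the letter [Some a] there; this adds one focused line. *)
Lemma focusing (C : finType) r : exists n, forall Phi : {ffun 'I_n -> option A} -> C,
  monochromatic_line Phi \/
  exists (I : finType) f (col : I -> C), [/\ #|I| = r, injective col & focused Phi f col].
Proof.
elim: r => [|r [n1 IHr]].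
  exists 0 => Phi; right.
  exists (void : finType); exists [ffun=> None], (of_void C).
  by split; [exact: card_void | case | exists (of_void _), (of_void _); split; case].
have [n2 hj2] := hjA {ffun {ffun 'I_n1 -> option A} -> C}.
exists (n1 + n2) => Phi.
have [w2 [S2 [S20 mono2]]] := hj2 (fun v => [ffun u => Phi (cat_word u (some_word v))]).
pose V := line (some_word w2) S2.
pose Phi1 u := Phi (cat_word u (V (Some a0))).
have Phi1E u a : Phi (cat_word u (V (Some a))) = Phi1 u.
  have := congr1 (fun g : {ffun _ -> C} => g u) (mono2 a a0).
  by rewrite !ffunE /Phi1 /V !line_some_word.
have [mono1|[I [f [col [cardI col_inj foc]]]]] := IHr Phi1.
  by left; apply: monochromatic_cat_word mono1.
case: (boolP [exists i, Phi1 f == col i]) => [/existsP[i /eqP Phi1f]|newcol].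
  by left; apply: monochromatic_cat_word (focused_monochromatic foc _); exists i.
right; exists (option I), (cat_word f (V None)).
exists (fun i : option I => if i is Some i' then col i' else Phi1 f); split.
- by rewrite card_option cardI.
- case=> [i|] [j|] // => [/col_inj->| e | e] //; case/existsP: newcol;
    [exists i | exists j]; by rewrite e eqxx.
- case: foc => W [Ss [Ss0 lineNone lineSome]].
  exists (fun i : option I => cat_word (if i is Some i' then W i' else f) (some_word w2)).
  exists (fun i : option I => cat_set (if i is Some i' then Ss i' else set0) S2).
  split=> [[i|]|[i|]|[i|] a]; rewrite ?cat_set_eq0 ?(negbTE S20) ?andbF ?line_cat -?/(V _) //.
  + by rewrite lineNone.
  + by rewrite line_set0.
  + by rewrite Phi1E lineSome.
  + by rewrite line_set0 Phi1E.
Qed.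

Lemma hales_jewett_option (C : finType) : hales_jewett (option A) C.
Proof.
have [n foc] := focusing C #|C|; exists n => Phi.
have [//|[I [f [col [cardI col_inj focf]]]]] := foc Phi.
apply: focused_monochromatic focf _.
have /codomP[i ->] : Phi f \in codom col by apply: inj_card_onto; rewrite ?cardI.
by exists i.
Qed.

End OptionStep.

Theorem hales_jewett_inhabited (A C : finType) : A -> hales_jewett A C.
Proof.
move=> a0; have [N] := ubnP #|A|; elim: N A a0 C => // N IHN A a0 C; rewrite ltnS => cardA.
have [a1 a1_neq|all_a0] := pickP (fun a => a != a0); last first.
  exists 1 => Phi; exists [ffun=> a0], setT; split; first by apply/set0Pn; exists ord0.
  by move=> a b; move/negbFE/eqP: (all_a0 a) => ->; move/negbFE/eqP: (all_a0 b) => ->.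
pose A' := {a : A | a != a0}.
have hjA' C' : hales_jewett A' C'.
  apply: (IHN A' (exist _ a1 a1_neq)); apply: leq_trans cardA.
  by rewrite card_sig cardC1 prednK //; apply/card_gt0P; exists a0.
pose g (b : option A') := if b is Some a then val a else a0.
apply: (@hales_jewett_surj _ _ _ g insub).
  by move=> a; rewrite /g; case: insubP => [u _ ->|/negbNE/eqP->].
exact: (hales_jewett_option (exist _ a1 a1_neq) hjA').
Qed.

Local Open Scope ring_scope.

Lemma leq_incr_ord K N (f : 'I_K -> 'I_N) :
  {homo f : i j / (i < j)%N} -> forall j : 'I_K, (j <= f j)%N.
Proof.
move=> f_incr [j lt_jK]; elim: j lt_jK => // j IHj lt_jK.
have lt_jK' := ltnW lt_jK.
exact: leq_ltn_trans (IHj lt_jK') (f_incr (Ordinal lt_jK') (Ordinal lt_jK) (ltnSn j)).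
Qed.

Lemma incr_ord_inj K N (f : 'I_K -> 'I_N) : {homo f : i j / (i < j)%N} -> injective f.
Proof.
by move=> f_incr i j eq_f; apply: ord_inj; case: (ltngtP i j) => // /f_incr; rewrite eq_f ltnn.
Qed.

Lemma incr_ord_id K (f : 'I_K -> 'I_K) : {homo f : i j / (i < j)%N} -> f =1 id.
Proof.
move=> f_incr j; apply: ord_inj; apply/eqP; rewrite eqn_leq leq_incr_ord // andbT.
pose g i := rev_ord (f (rev_ord i)).
have g_incr : {homo g : i1 i2 / (i1 < i2)%N}.
  move=> i1 i2 lt_i12; have := ltn_ord (f (rev_ord i1)).
  have : (rev_ord i2 < rev_ord i1)%N by rewrite /=; have := ltn_ord i2; lia.
  move/f_incr; rewrite /=; lia.
have := leq_incr_ord g_incr (rev_ord j); rewrite /g rev_ordK /=.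
have := ltn_ord (f j); have := ltn_ord j; lia.
Qed.

Section Echelon.
Variable F : fieldType.

Record pivots N K (X : 'M[F]_(N, K)) (p : 'I_K -> 'I_N) : Prop := Pivots {
  pivots_incr : {homo p : j1 j2 / (j1 < j2)%N};
  pivots_row : forall j l, X (p j) l = (j == l)%:R;
  pivots_above : forall j (i : 'I_N), (i < p j)%N -> X i j = 0 }.

Definition echelon N K (X : 'M[F]_(N, K)) := exists p, pivots X p.

Lemma pivots_homo_leq N K (X : 'M[F]_(N, K)) p :
  pivots X p -> {homo p : j1 j2 / (j1 <= j2)%N}.
Proof.
move=> pX j1 j2; rewrite leq_eqVlt => /predU1P[/ord_inj-> //|/(pivots_incr pX)].
exact: ltnW.
Qed.

Lemma pivots_mulmx_row N M K (P : 'M[F]_(N, M)) (U : 'M[F]_(M, K)) p i l :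
  pivots P p -> (P *m U) (p i) l = U i l.
Proof.
move=> pP; rewrite mxE (bigD1 i) //= pivots_row // eqxx mul1r big1 ?addr0 // => u ne_ui.
by rewrite pivots_row // eq_sym (negbTE ne_ui) mul0r.
Qed.

Lemma pivots_mul N M K (R : 'M[F]_(N, M)) (X : 'M[F]_(M, K)) pR pX :
  pivots R pR -> pivots X pX -> pivots (R *m X) (pR \o pX).
Proof.
move=> pvR pvX; split=> [j1 j2 lt_j12|j l|j i lt_i].
- exact/(pivots_incr pvR)/(pivots_incr pvX).
- by rewrite pivots_mulmx_row // pivots_row.
- rewrite mxE big1 // => u _; have [lt_u|le_u] := ltnP u (pX j).
    by rewrite (pivots_above pvX) // mulr0.
  by rewrite (pivots_above pvR) ?mul0r // (leq_trans lt_i) // (pivots_homo_leq pvR).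
Qed.

Lemma echelon_mul N M K (R : 'M[F]_(N, M)) (X : 'M[F]_(M, K)) :
  echelon R -> echelon X -> echelon (R *m X).
Proof. by move=> [pR pvR] [pX pvX]; exists (pR \o pX); apply: pivots_mul. Qed.

Lemma pivots_col_mx N1 N2 K (Y1 : 'M[F]_(N1, K)) (Y2 : 'M[F]_(N2, K)) p :
  pivots Y1 p -> pivots (col_mx Y1 Y2) (lshift N2 \o p).
Proof.
move=> pY; split=> [j1 j2|j l|j i] /=; first exact: (pivots_incr pY).
  by rewrite col_mxEu (pivots_row pY).
case: (split_ordP i) => [i' ->|i'' ->] lt_i /=; first by rewrite col_mxEu (pivots_above pY).
by have := leq_trans lt_i (ltnW (ltn_ord (p j))); rewrite ltnNge leq_addr.
Qed.

Lemma pivots_mulmx_col_above N M K (P : 'M[F]_(N, M)) (U : 'M[F]_(M, K)) p (i : 'I_M) j :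
  pivots P p -> (forall u : 'I_M, (u < i)%N -> U u j = 0) ->
  forall t : 'I_N, (t < p i)%N -> (P *m U) t j = 0.
Proof.
move=> pP U_above t lt_t; rewrite mxE big1 // => u _.
have [lt_ui|le_iu] := ltnP u i; first by rewrite U_above // mulr0.
by rewrite (pivots_above pP) ?mul0r // (leq_trans lt_t) // (pivots_homo_leq pP).
Qed.

Lemma echelon_mulmx_eq1 N K (P : 'M[F]_(N, K)) (U : 'M[F]_K) :
  echelon P -> echelon (P *m U) -> U = 1%:M.
Proof.
move=> [p pP] [q pQ].
have pivot_row j : exists i, p i = q j /\ row i U = row j 1%:M.
  have [i0 Ui0] : exists i, U i j != 0.
    apply/existsP; apply: contraT => /existsPn U0.
    have := pivots_row pQ j j; rewrite eqxx mxE big1 => [/eqP|u _].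
      by rewrite eq_sym oner_eq0.
    by move/negbNE/eqP: (U0 u) => ->; rewrite mulr0.
  case: (@arg_minnP _ i0 (fun i => U i j != 0) val Ui0) => i Ui min_i.
  have U_above (u : 'I_K) : (u < i)%N -> U u j = 0.
    by apply: contraTeq => /min_i; rewrite leqNgt.
  have pi_qj : p i = q j.
    apply: ord_inj; case: (ltngtP (p i) (q j)) => // [/(pivots_above pQ)|].
      by rewrite pivots_mulmx_row // => /eqP; rewrite (negbTE Ui).
    move/(pivots_mulmx_col_above pP U_above); rewrite pivots_row // eqxx.
    by move/eqP; rewrite oner_eq0.
  exists i; split=> //; apply/rowP=> l.
  by rewrite !mxE -(pivots_mulmx_row U i l pP) pi_qj (pivots_row pQ).
have [f pivot_row_f] := fin_all_exists pivot_row.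
have f_incr : {homo f : j1 j2 / (j1 < j2)%N}.
  move=> j1 j2 lt_j; rewrite ltnNge; apply/negP => /(pivots_homo_leq pP).
  by rewrite !(pivot_row_f _).1 leqNgt (pivots_incr pQ lt_j).
apply/row_matrixP => i.
by rewrite -[in LHS](incr_ord_id f_incr i) (pivot_row_f i).2.
Qed.

Lemma row'_mul m n p (i0 : 'I_m) (A : 'M[F]_(m, n)) (B : 'M[F]_(n, p)) :
  row' i0 (A *m B) = row' i0 A *m B.
Proof. by apply/matrixP=> i j; rewrite !mxE; apply: eq_bigr => u _; rewrite mxE. Qed.

(* Sherman-Morrison: the inverse is [1 - (1 + a)^-1 *: d *m z]. *)
Lemma unitmx_1_add_mul n (d : 'cV[F]_n) (z : 'rV[F]_n) :
  1 + (z *m d) 0 0 != 0 -> 1%:M + d *m z \in unitmx.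
Proof.
set a := (z *m d) 0 0 => a_neq; set c := - (1 + a)^-1.
have dzdz : d *m z *m (d *m z) = a *: (d *m z).
  by rewrite mulmxA -(mulmxA d) [z *m d]mx11_scalar mul_mx_scalar scalemxAl.
suff /mulmx1_unit[] : (1%:M + d *m z) *m (1%:M + c *: (d *m z)) = 1%:M by [].
rewrite mulmxDr mulmx1 mulmxDl mul1mx -scalemxAr dzdz scalerA -addrA.
have coef : 1 + (c + c * a) = 0.
  by rewrite -{1}(mulr1 c) -mulrDr mulNr mulVf // subrr.
by rewrite -scalerDl -[X in _ + (X + _)]scale1r -scalerDl coef scale0r addr0.
Qed.

Lemma pivot_elimination N K (Y : 'M[F]_(N, K)) i0 j0 : Y i0 j0 != 0 ->
  exists2 T, T \in unitmx & row i0 (Y *m T) = delta_mx 0 j0 /\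
    forall i, Y i j0 = 0 -> row i (Y *m T) = row i Y.
Proof.
set y := Y i0 j0 => y_neq0; pose z := y^-1 *: (delta_mx 0 j0 - row i0 Y).
have rowT i : row i (Y *m (1%:M + delta_mx j0 0 *m z)) = row i Y + Y i j0 *: z.
  apply/rowP=> l; rewrite mulmxDr mulmx1 mulmxA -colE !mxE big_ord1 !mxE.
  by rewrite [Y i j0 * _]mulrC.
exists (1%:M + delta_mx j0 0 *m z).
  apply: unitmx_1_add_mul; rewrite -colE !mxE !eqxx /= -/y mulrBr mulr1 mulVf //.
  by rewrite addrC subrK invr_eq0.
split=> [|i Yi]; rewrite rowT ?Yi ?scale0r ?addr0 //.
by rewrite scalerA mulfV // scale1r addrC subrK.
Qed.

Record partial_pivots N K (X : 'M[F]_(N, K)) r (p : 'I_r -> 'I_N) : Prop :=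
  PartialPivots {
    partial_pivots_leq : (r <= K)%N;
    partial_pivots_incr : {homo p : j1 j2 / (j1 < j2)%N};
    partial_pivots_row : forall j l, X (p j) l = (j == l :> nat)%:R;
    partial_pivots_above : forall (j : 'I_r) (l : 'I_K) (i : 'I_N),
      j = l :> nat -> (i < p j)%N -> X i l = 0;
    partial_pivots_zero : forall (l : 'I_K) i, (r <= l)%N -> X i l = 0 }.

Lemma partial_pivots_lift N K (Y : 'M[F]_(N.+1, K)) r (p : 'I_r -> 'I_N) :
    partial_pivots (row' ord_max Y) p ->
    (forall l : 'I_K, (r <= l)%N -> Y ord_max l = 0) ->
  partial_pivots Y (fun j => lift ord_max (p j)).
Proof.
case=> rK p_incr p_row p_above p_zero Y_last.
split=> // [j1 j2|j l|j l i jl|l i le_rl].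
- by rewrite !lift_max; apply: p_incr.
- by rewrite -p_row mxE.
- case: (unliftP ord_max i) => [i' ->|->]; rewrite lift_max.
    by move=> lt_i; rewrite -(p_above j l i' jl) ?mxE // -(lift_max (p j)).
  by rewrite /= ltnNge ltnW.
- case: (unliftP ord_max i) => [i' ->|->]; last exact: Y_last.
  by rewrite -(p_zero l i') ?mxE.
Qed.

Lemma partial_pivots_new N K (Y : 'M[F]_(N.+1, K)) r (p : 'I_r -> 'I_N) (lt_rK : (r < K)%N) :
    partial_pivots (row' ord_max Y) p -> row ord_max Y = delta_mx 0 (Ordinal lt_rK) ->
  partial_pivots Y (r := r.+1)
    (fun j => if unlift ord_max j is Some j' then lift ord_max (p j') else ord_max).
Proof.
case=> _ p_incr p_row p_above p_zero Y_last.
have Y_lastE l : Y ord_max l = (r == l :> nat)%:R.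
  by have := congr1 (fun v : 'rV_K => v 0 l) Y_last; rewrite !mxE eq_sym.
split=> // [j1 j2|j l|j l i jl|l i le_rl].
- case: (unliftP ord_max j1) => [j1' ->|->]; case: (unliftP ord_max j2) => [j2' ->|->];
    rewrite ?liftK ?unlift_none ?lift_max //= ?ltnn //.
  + exact: p_incr.
  + by rewrite ltnNge ltnW.
- case: (unliftP ord_max j) => [j' ->|->]; rewrite ?liftK ?unlift_none.
    by rewrite lift_max -p_row mxE.
  by rewrite Y_lastE.
- case: (unliftP ord_max i) => [i' ->|->]; case: (unliftP ord_max j) jl => [j' ->|->];
    rewrite ?liftK ?unlift_none ?lift_max /= => jl lt_i.
  + by rewrite -(p_above j' l i') ?mxE.
  + by rewrite -(p_zero l i') ?mxE -?jl.
  + by have := ltn_ord (p j'); rewrite ltnNge ltnW.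
  + by rewrite ltnn in lt_i.
- case: (unliftP ord_max i) => [i' ->|->]; first by rewrite -(p_zero l i') ?mxE // ltnW.
  by rewrite Y_lastE; case: eqP le_rl => // ->; rewrite ltnn.
Qed.

Lemma partial_pivots_exist N K (A : 'M[F]_(N, K)) :
  exists G r (p : 'I_r -> 'I_N), G \in unitmx /\ partial_pivots (A *m G) p.
Proof.
elim: N A => [|N IHN] A.
  by exists 1%:M, 0, id; split; [exact: unitmx1 | split=> // [[]|[]|? []]].
have [G' [r [p [G'_unit pY]]]] := IHN (row' ord_max A).
have {}pY : partial_pivots (row' ord_max (A *m G')) p by rewrite row'_mul.
set Y := A *m G' in pY *.
have [/existsP[j0 /andP[le_rj0 Yj0]]|/existsPn Y_last] :=
  boolP [exists l : 'I_K, (r <= l)%N && (Y ord_max l != 0)]; last first.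
  exists G', r, (fun j => lift ord_max (p j)); split=> //.
  apply: partial_pivots_lift pY _ => l le_rl.
  by apply/eqP; move: (Y_last l); rewrite le_rl negbK.
have lt_rK : (r < K)%N := leq_ltn_trans le_rj0 (ltn_ord j0).
pose Y1 := Y *m tperm_mx j0 (Ordinal lt_rK).
have Y1E i l : Y1 i l = Y i (tperm j0 (Ordinal lt_rK) l) by rewrite /Y1 -xcolE mxE.
have Y_top i (l : 'I_K) : (r <= l)%N -> Y (lift ord_max i) l = 0.
  by move=> le_rl; rewrite -(partial_pivots_zero pY i le_rl) [RHS]mxE.
have Y1_top i : Y1 (lift ord_max i) (Ordinal lt_rK) = 0 by rewrite Y1E tpermR Y_top.
have Y1_pivot : Y1 ord_max (Ordinal lt_rK) != 0 by rewrite Y1E tpermR.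
have [T T_unit [lastT topT]] := pivot_elimination Y1_pivot.
exists (G' *m tperm_mx j0 (Ordinal lt_rK) *m T), r.+1.
exists (fun j => if unlift ord_max j is Some j' then lift ord_max (p j') else ord_max).
split; first by rewrite !unitmx_mul G'_unit unitmx_perm T_unit.
rewrite !mulmxA -/Y -/Y1; apply: (partial_pivots_new _ lastT).
suff -> : row' ord_max (Y1 *m T) = row' ord_max Y by [].
apply/matrixP=> i l; rewrite [LHS]mxE [RHS]mxE.
move/rowP/(_ l): (topT _ (Y1_top i)); rewrite [LHS]mxE [RHS]mxE => ->.
by rewrite Y1E; case: tpermP => // ->; rewrite !Y_top.
Qed.

Lemma pivots_of_partial N K (X : 'M[F]_(N, K)) (p : 'I_K -> 'I_N) :
  partial_pivots X p -> pivots X p.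
Proof. by case=> _ p_incr p_row p_above _; split=> // j i; apply: p_above. Qed.

Lemma rank_lt_zero_col N K (X : 'M[F]_(N, K)) (l : 'I_K) :
  (forall i, X i l = 0) -> (\rank X < K)%N.
Proof.
move=> X_l; have X_sub : (X^T <= row' l X^T)%MS.
  apply/row_subP=> a; case: (unliftP l a) => [a' ->|->].
    have -> : row (lift l a') X^T = row a' (row' l X^T) by apply/rowP=> i; rewrite !mxE.
    exact: row_sub.
  have -> : row l X^T = 0 by apply/rowP=> i; rewrite !mxE X_l.
  exact: sub0mx.
rewrite -mxrank_tr; apply: leq_ltn_trans (mxrankS X_sub) _.
by apply: leq_ltn_trans (rank_leq_row _) _; rewrite ltn_predL (leq_ltn_trans _ (ltn_ord l)).
Qed.

Lemma echelon_decomposition N K (A : 'M[F]_(N, K)) :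
  \rank A = K -> exists E G, [/\ echelon E, G \in unitmx & A = E *m G].
Proof.
move=> rankA; have [G [r [p [G_unit pAG]]]] := partial_pivots_exist A.
have rK : r = K.
  apply/eqP; rewrite eqn_leq (partial_pivots_leq pAG) leqNgt; apply/negP=> lt_rK.
  have /rank_lt_zero_col : forall i, (A *m G) i (Ordinal lt_rK) = 0.
    by move=> i; apply: (partial_pivots_zero pAG).
  by rewrite mxrankMfree ?row_free_unit // rankA ltnn.
subst r; exists (A *m G), (invmx G); split; last by rewrite mulmxK.
  by exists p; apply: pivots_of_partial.
by rewrite unitmx_inv.
Qed.

Lemma submx_pidP m n (A : 'M[F]_(m, n)) r :
  reflect (forall i (l : 'I_n), (r <= l)%N -> A i l = 0) (A <= (pid_mx r : 'M_n))%MS.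
Proof.
apply: (iffP idP) => [/submxP[D ->] i l le_rl | A_r].
  rewrite mxE big1 // => u _; rewrite mxE.
  by case: eqP => [->|]; rewrite ?ltnNge ?le_rl ?andbF mulr0.
apply/submxP; exists A; apply/matrixP=> i l; rewrite mxE (bigD1 l) //= mxE eqxx /=.
rewrite big1 => [|u ne_ul]; last first.
  by rewrite mxE; case: eqP => [/val_inj/eqP|]; rewrite ?(negbTE ne_ul) ?mulr0.
by case: ltnP => [_|/A_r->]; rewrite ?mulr1 ?mul0r addr0.
Qed.

Lemma colspan_ltE p q (A : 'M[F]_(p, q)) t j l :
  colspan_lt A t j l = if (j < t)%N then A l j else 0.
Proof. by rewrite mxE; case: ifP; rewrite !mxE. Qed.

Lemma row_full_pivots N K (X : 'M[F]_(N, K)) p : pivots X p -> row_full X.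
Proof.
move=> pX; rewrite -sub1mx; apply/row_subP=> a.
have -> : row a 1%:M = row (p a) X by apply/rowP=> l; rewrite !mxE (pivots_row pX).
exact: row_sub.
Qed.

Lemma colspan_lt_pivots N K (X : 'M[F]_(N, K)) p i :
  pivots X p -> (colspan_lt X^T (p i) == (pid_mx i : 'M[F]_K))%MS.
Proof.
move=> pX; apply/andP; split.
  apply/submx_pidP=> t l le_il; rewrite colspan_ltE mxE; case: ifP => // lt_t.
  by rewrite (pivots_above pX) // (leq_trans lt_t) // (pivots_homo_leq pX).
apply/row_subP=> a; have [lt_ai|le_ia] := ltnP a i.
  have -> : row a (pid_mx i : 'M[F]_K) = row (p a) (colspan_lt X^T (p i)).
    apply/rowP=> l; rewrite !mxE (pivots_incr pX lt_ai) !mxE.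
    by rewrite (pivots_row pX) lt_ai andbT.
  exact: row_sub.
have -> : row a (pid_mx i : 'M[F]_K) = 0 by apply/rowP=> l; rewrite !mxE ltnNge le_ia andbF.
exact: sub0mx.
Qed.

Lemma is_rcef_pivots N K (X : 'M[F]_(N, K)) p : pivots X p -> is_rcef X.
Proof.
move=> pX; apply/existsP; exists ord_max; apply/existsP; exists [ffun i => p i].
apply/and3P; split.
- apply/forallP=> i1; apply/forallP=> i2; apply/implyP=> /andP[lt_i _].
  by rewrite !ffunE (pivots_incr pX).
- apply/forallP=> i; apply/implyP=> _; rewrite ffunE colspan_lt_pivots // andbT.
  by apply/eqP/colP=> l; rewrite !mxE (pivots_row pX) eqxx andbT eq_sym.
- by rewrite trmxK pid_mx_1 /eqmx submx1 sub1mx (row_full_pivots pX).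
Qed.

Lemma pivots_of_rcef N K (X : 'M[F]_(N, K)) : is_rcef X -> \rank X = K -> echelon X.
Proof.
case/existsP=> p0 /existsP[j /and3P[/forallP j_incr /forallP j_piv X_full]] rankX.
have lt_p0 (i : 'I_K) : (i < p0)%N.
  by move: (eqmx_rank X_full); rewrite trmxK rankX rank_pid_mx ?leq_ord // => <-.
have j_row i : col (j i) X^T = delta_mx i 0.
  by have /and3P[/eqP] := implyP (j_piv i) (lt_p0 i).
have j_span i : (colspan_lt X^T (j i) <= (pid_mx i : 'M[F]_K))%MS.
  by have /and3P[] := implyP (j_piv i) (lt_p0 i).
exists (fun i => j i); split=> [i1 i2 lt_i|i l|i t lt_t].
- by have := implyP (forallP (j_incr i1) i2); rewrite lt_i lt_p0; apply.
- by have /colP/(_ l) := j_row i; rewrite !mxE eqxx andbT eq_sym.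
- have /submx_pidP/(_ 0 i (leqnn i)) := submx_trans (row_sub t _) (j_span i).
  by rewrite mxE colspan_ltE lt_t mxE.
Qed.

Lemma in_E_echelon N K (X : 'M[F]_(N, K)) : echelon X -> in_E X.
Proof.
by case=> p pX; apply/andP; split; [exact: row_full_pivots pX | exact: is_rcef_pivots pX].
Qed.

End Echelon.

Definition select_mx {F : fieldType} M' M (sigma : 'I_M -> 'I_M') : 'M[F]_(M', M) :=
  \matrix_(i, j) (i == sigma j)%:R.

Lemma pivots_select_mx {F : fieldType} M' M (sigma : 'I_M -> 'I_M') :
  {homo sigma : i j / (i < j)%N} -> pivots (select_mx sigma : 'M[F]_(M', M)) sigma.
Proof.
move=> sigma_incr; split=> // [j l|j i lt_i]; rewrite mxE.
  by rewrite (inj_eq (incr_ord_inj sigma_incr)).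
by case: eqP lt_i => // ->; rewrite ltnn.
Qed.

Lemma tau_echelon_mul (F : finFieldType) N K (E : 'M[F]_(N, K)) (G : 'M[F]_K) :
  echelon E -> G \in unitmx -> tau (E *m G) = invmx G.
Proof.
move=> E_ech G_unit; have [p pE] := E_ech.
rewrite /tau; case: pickP => [T /andP[T_unit rcefT]|no_rcef].
  have GT_ech : echelon (E *m (G *m T)).
    apply: pivots_of_rcef; first by rewrite mulmxA.
    rewrite mxrankMfree ?row_free_unit ?unitmx_mul ?G_unit //.
    exact/eqP/(row_full_pivots pE).
  have GT1 := echelon_mulmx_eq1 E_ech GT_ech.
  by rewrite -[T]mul1mx -(mulVmx G_unit) -mulmxA GT1 mulmx1.
move/(_ (invmx G)): no_rcef; rewrite unitmx_inv G_unit mulmxK //.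
by rewrite (is_rcef_pivots pE).
Qed.

Section Blocks.
Variable F : fieldType.

Definition rcons_col N M (Y : 'M[F]_(N, M)) (c : 'cV[F]_N) : 'M[F]_(N, M.+1) :=
  \matrix_(i, j) if unlift ord_max j is Some j' then Y i j' else c i 0.

Lemma mul_rcons_col N M K (Y : 'M[F]_(N, M)) c (X : 'M[F]_(M.+1, K)) :
  rcons_col Y c *m X = Y *m row' ord_max X + c *m row ord_max X.
Proof.
apply/matrixP=> i l; rewrite !mxE big_ord_recr /= mxE unlift_none big_ord1 !mxE.
congr (_ + _); apply: eq_bigr => j _.
have -> : widen_ord (leqnSn M) j = lift ord_max j by apply: ord_inj; rewrite lift_max.
by rewrite !mxE liftK.
Qed.

Lemma mulmx_rcons_col L N M (A : 'M[F]_(L, N)) (Y : 'M[F]_(N, M)) c :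
  A *m rcons_col Y c = rcons_col (A *m Y) (A *m c).
Proof.
apply/matrixP=> i j; rewrite mxE [RHS]mxE; under eq_bigr do rewrite mxE.
by case: (unlift ord_max j) => [j'|]; rewrite mxE.
Qed.

Lemma rcons_col_col' N M (Y : 'M[F]_(N, M.+1)) :
  (forall i, Y i ord_max = 0) -> rcons_col (col' ord_max Y) 0 = Y.
Proof.
move=> Y_last; apply/matrixP=> i j; rewrite !mxE.
by case: (unliftP ord_max j) => [j' ->|->]; rewrite ?mxE ?Y_last.
Qed.

Lemma pivots_rcons_col N M (Y : 'M[F]_(N, M)) p (c : 'cV[F]_N) (i0 : 'I_N) :
    pivots Y p -> c i0 0 = 1 -> (forall i : 'I_N, (i < i0)%N -> c i 0 = 0) ->
    (forall l, Y i0 l = 0) -> (forall j, (p j < i0)%N) ->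
  pivots (rcons_col Y c) (fun j => if unlift ord_max j is Some j' then p j' else i0).
Proof.
move=> pY c_i0 c_above Y_i0 p_lt; split=> [j1 j2|j l|j i].
- case: (unliftP ord_max j1) => [j1' ->|->]; case: (unliftP ord_max j2) => [j2' ->|->];
    rewrite ?liftK ?unlift_none ?lift_max /= ?ltnn //; last by rewrite ltnNge ltnW.
  exact: (pivots_incr pY).
- rewrite mxE; case: (unliftP ord_max j) => [j' ->|->]; case: (unliftP ord_max l) => [l' ->|->];
    rewrite ?liftK ?unlift_none ?(inj_eq lift_inj) ?(pivots_row pY) ?Y_i0 ?c_i0 ?eqxx //.
  + by rewrite c_above // eq_sym (negbTE (neq_lift _ _)).
  + by rewrite (negbTE (neq_lift _ _)).
- case: (unliftP ord_max j) => [j' ->|->]; rewrite mxE ?liftK ?unlift_none.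
    exact: (pivots_above pY).
  exact: c_above.
Qed.

Lemma line_rows_mx N L (w : {ffun 'I_N -> 'rV[F]_L}) S (g : 'rV[F]_L) :
  \matrix_t line w S g t = \matrix_t line w S 0 t + \col_t (t \in S)%:R *m g.
Proof.
apply/matrixP=> t j; rewrite !mxE big_ord1 !mxE !ffunE.
by case: (t \in S); rewrite ?mxE ?mul1r ?mul0r ?add0r ?addr0.
Qed.

Lemma pivots_row'_lt M K (X : 'M[F]_(M.+1, K.+1)) p :
    pivots X p -> (p ord_max < M)%N ->
  exists2 p', pivots (row' ord_max X) p' & p' ord_max = p ord_max :> nat.
Proof.
move=> pX lt_pM.
have lt_p j : (p j < M)%N.
  exact: leq_ltn_trans (pivots_homo_leq pX (leq_ord j : (j <= ord_max)%N)) lt_pM.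
have liftE j : lift ord_max (Ordinal (lt_p j)) = p j by apply: ord_inj; rewrite lift_max.
exists (fun j => Ordinal (lt_p j)) => //.
split=> [j1 j2 /(pivots_incr pX)//|j l|j i lt_i]; rewrite mxE ?liftE.
  exact: (pivots_row pX).
by apply: (pivots_above pX); rewrite lift_max.
Qed.

Lemma pivots_last_row M K (X : 'M[F]_(M.+1, K.+1)) p :
    pivots X p -> p ord_max = ord_max ->
  [/\ row ord_max X = delta_mx 0 ord_max, forall i, row' ord_max X i ord_max = 0
    & echelon (col' ord_max (row' ord_max X))].
Proof.
move=> pX p_max; split.
- by apply/rowP=> l; rewrite !mxE -{1}p_max (pivots_row pX) eq_sym.
- by move=> i; rewrite mxE (pivots_above pX) // p_max lift_max.
have lt_p l : (p (lift ord_max l) < M)%N.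
  have lt_l : (lift ord_max l < @ord_max K)%N by rewrite lift_max.
  by have := pivots_incr pX lt_l; rewrite p_max.
have liftE l : lift ord_max (Ordinal (lt_p l)) = p (lift ord_max l).
  by apply: ord_inj; rewrite lift_max.
exists (fun l => Ordinal (lt_p l)).
split=> [j1 j2 lt_j|j l|j i lt_i]; rewrite ?mxE ?liftE.
- by apply: (pivots_incr pX); rewrite !lift_max.
- by rewrite (pivots_row pX) (inj_eq lift_inj).
- by apply: (pivots_above pX); rewrite lift_max.
Qed.

End Blocks.

Lemma pigeonhole_count (T : eqType) (C : finType) (f : T -> C) (s : seq T) m :
  (#|C| * m < size s)%N -> exists c, (m <= count (fun x => f x == c) s)%N.
Proof.
move=> lt_s; have [c|small] := pickP (fun c => m <= count (fun x => f x == c) s)%N.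
  by exists c.
have sum_count : (\sum_c count (fun x => f x == c) s)%N = size s.
  elim: s {lt_s small} => [|x s IHs] /=; first by rewrite big1.
  rewrite big_split /= IHs (bigD1 (f x)) //= eqxx big1 // => c /negbTE.
  by rewrite eq_sym => ->.
move: lt_s; rewrite -sum_count -sum_nat_const ltnNge => /negP[].
by apply: leq_sum => c _; apply: ltnW; rewrite ltnNge small.
Qed.

Section Ramsey.
Variable F : finFieldType.

Definition echelon_ramsey k M (C : finType) :=
  exists N, forall chi : 'M[F]_(N, k) -> C,
    exists2 R : 'M[F]_(N, M), echelon R &
      exists c0, forall X : 'M[F]_(M, k), echelon X -> chi (R *m X) = c0.

Definition last_pivot_ramsey k M (C : finType) :=
  exists N, forall chi : 'M[F]_(N, k.+1) -> C,
    exists2 R : 'M[F]_(N, M), echelon R &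
      exists phi : nat -> C, forall X p, pivots X p -> chi (R *m X) = phi (p ord_max).

Section LastPivotStep.
Variables (k M L1 L2 NW : nat) (C : finType) (chi : 'M[F]_((L1 + NW)%N, k.+1) -> C).
Variables (w : {ffun 'I_NW -> 'rV[F]_L1}) (S : {set 'I_NW}) (s0 : 'I_NW).
Hypotheses (s0S : s0 \in S) (s0_min : forall t, t \in S -> (s0 <= t)%N).

Local Notation H := (\matrix_t line w S 0 t).
Local Notation s := (\col_t (t \in S)%:R : 'cV[F]_NW).

Hypothesis line_mono : forall g (T : 'M[F]_(L1, k.+1)),
  chi (col_mx T (\matrix_t line w S g t *m T)) = chi (col_mx T (H *m T)).

Variables (RB : 'M[F]_(L1, L2)) (RA : 'M[F]_(L2, M)) (cB : C) (phiA : nat -> C).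
Hypotheses (RB_ech : echelon RB) (RA_ech : echelon RA).
Hypothesis RB_mono : forall Z : 'M[F]_(L2, k), echelon Z ->
  chi (col_mx (rcons_col (RB *m Z) 0)
              (H *m rcons_col (RB *m Z) 0 + s *m delta_mx 0 ord_max)) = cB.
Hypothesis RA_mono : forall (X : 'M[F]_(M, k.+1)) p, pivots X p ->
  chi (col_mx (RB *m (RA *m X)) (H *m (RB *m (RA *m X)))) = phiA (p ord_max).

Local Notation R := (rcons_col (col_mx (RB *m RA) (H *m (RB *m RA))) (col_mx 0 s)).

Lemma last_pivot_echelon : echelon R.
Proof.
have [pR pR'] := echelon_mul RB_ech RA_ech.
exists (fun j => if unlift ord_max j is Some j' then lshift NW (pR j') else rshift L1 s0).
apply: pivots_rcons_col (pivots_col_mx _ pR') _ _ _ _ => [|i|l|j].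
- by rewrite col_mxEd mxE s0S.
- case: (split_ordP i) => [i' ->|i' -> /=]; rewrite ?col_mxEu ?col_mxEd mxE //.
  by rewrite ltn_add2l; case: (boolP (i' \in S)) => // /s0_min; rewrite leqNgt => /negbTE->.
- rewrite col_mxEd mxE big1 // => u _.
  by rewrite !mxE !ffunE s0S mxE mul0r.
- by rewrite /= (leq_trans (ltn_ord _)) ?leq_addr.
Qed.

Lemma last_pivot_mulmx (X : 'M[F]_(M.+1, k.+1)) :
  R *m X = col_mx (RB *m RA *m row' ord_max X)
                  (H *m (RB *m RA *m row' ord_max X) + s *m row ord_max X).
Proof. by rewrite mul_rcons_col !mul_col_mx mul0mx add_col_mx addr0 !mulmxA. Qed.

Lemma last_pivot_lt (X : 'M[F]_(M.+1, k.+1)) p :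
  pivots X p -> (p ord_max < M)%N -> chi (R *m X) = phiA (p ord_max).
Proof.
move=> pX lt_pM; have [p' pX' <-] := pivots_row'_lt pX lt_pM.
have [pR pR'] := echelon_mul RB_ech RA_ech.
rewrite last_pivot_mulmx; set T := RB *m RA *m row' ord_max X.
have /submxP[g ->] : (row ord_max X <= T)%MS.
  exact/submx_full/(row_full_pivots (pivots_mul pR' pX')).
rewrite (mulmxA _ g) -mulmxDl -line_rows_mx line_mono /T -mulmxA.
exact: RA_mono.
Qed.

Lemma last_pivot_max (X : 'M[F]_(M.+1, k.+1)) p :
  pivots X p -> p ord_max = ord_max -> chi (R *m X) = cB.
Proof.
move=> pX p_max; have [X_last X_top Z_ech] := pivots_last_row pX p_max.
rewrite last_pivot_mulmx X_last -(rcons_col_col' X_top) mulmx_rcons_col mulmx0 -!mulmxA.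
exact/RB_mono/echelon_mul.
Qed.

End LastPivotStep.

Lemma last_pivot_ramsey0 k C : last_pivot_ramsey k 0 C.
Proof.
exists 0 => chi; exists 0; first by exists (fun j => j); split=> [] [].
by exists (fun=> chi 0) => X p _; case: (p ord_max).
Qed.

Lemma last_pivot_ramseyS k M C :
    (forall M' C', echelon_ramsey k M' C') -> last_pivot_ramsey k M C ->
  last_pivot_ramsey k M.+1 C.
Proof.
move=> ramsey_k [L2 ramseyA]; have [L1 ramseyB] := ramsey_k L2 C.
have [NW hjW] := hales_jewett_inhabited {ffun 'M[F]_(L1, k.+1) -> C} (0 : 'rV[F]_L1).
exists (L1 + NW)%N => chi.
have [w [S [S0 mono]]] := hjW (fun u => [ffun T => chi (col_mx T (\matrix_t u t *m T))]).
have line_mono g (T : 'M[F]_(L1, k.+1)) :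
    chi (col_mx T (\matrix_t line w S g t *m T)) =
    chi (col_mx T (\matrix_t line w S 0 t *m T)).
  by have := congr1 (fun f : {ffun _ -> C} => f T) (mono g 0); rewrite !ffunE.
pose H := \matrix_t line w S 0 t; pose s := \col_t (t \in S)%:R : 'cV[F]_NW.
have [RB RB_ech [cB RB_mono]] := ramseyB (fun Z =>
  chi (col_mx (rcons_col Z 0) (H *m rcons_col Z 0 + s *m delta_mx 0 ord_max))).
have [RA RA_ech [phiA RA_mono]] := ramseyA (fun Y => chi (col_mx (RB *m Y) (H *m (RB *m Y)))).
have [s0 s0S s0_min] : exists2 s0 : 'I_NW, s0 \in S & forall t, t \in S -> (s0 <= t)%N.
  by case/set0Pn: S0 => t0 t0S; case: (arg_minnP val t0S) => s0; exists s0.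
exists (rcons_col (col_mx (RB *m RA) (H *m (RB *m RA))) (col_mx 0 s)).
  exact: (last_pivot_echelon w s0S).
exists (fun n => if (n < M)%N then phiA n else cB) => X p pX.
have [lt_pM|le_Mp] := ltnP (p ord_max) M.
  exact: (last_pivot_lt line_mono RB_ech RA_ech RA_mono pX lt_pM).
have p_max : p ord_max = ord_max.
  by apply: ord_inj; apply/eqP; rewrite eqn_leq le_Mp -ltnS ltn_ord.
exact: (last_pivot_max RA_ech RB_mono pX p_max).
Qed.

Lemma echelon_ramsey0 M C : echelon_ramsey 0 M C.
Proof.
exists M => chi; exists (select_mx id); first by exists id; apply: pivots_select_mx.
by exists (chi 0) => X _; rewrite thinmx0.
Qed.

Lemma echelon_ramseyS k M C :
  (forall M', last_pivot_ramsey k M' C) -> echelon_ramsey k.+1 M C.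
Proof.
move=> ramsey_last; pose M' := (#|C| * M).+1%N.
have [N ramseyN] := ramsey_last M'; exists N => chi.
have [R R_ech [phi R_phi]] := ramseyN chi.
have [c M_c] : exists c, (M <= count (fun i => phi i == c) (iota 0 M'))%N.
  by apply: pigeonhole_count; rewrite size_iota.
pose L := [seq i <- iota 0 M' | phi i == c].
have L_sorted : sorted ltn L.
  by apply: sorted_filter; [exact: ltn_trans | exact: iota_ltn_sorted].
have lt_L (j : 'I_M) : (j < size L)%N by rewrite size_filter (leq_trans _ M_c).
have L_j (j : 'I_M) : nth 0%N L j \in L := mem_nth 0%N (lt_L j).
have lt_M' (j : 'I_M) : (nth 0%N L j < M')%N.
  by move: (L_j j); rewrite mem_filter mem_iota => /andP[_].
pose sigma j : 'I_M' := Ordinal (lt_M' j).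
have sigma_incr : {homo sigma : j1 j2 / (j1 < j2)%N}.
  by move=> j1 j2; apply: (sorted_ltn_nth ltn_trans 0%N L_sorted); rewrite inE.
have select_pivots := pivots_select_mx (F := F) sigma_incr.
exists (R *m select_mx sigma); first by apply: echelon_mul R_ech _; exists sigma.
exists c => X [p pX]; rewrite -mulmxA (R_phi _ _ (pivots_mul select_pivots pX)).
by move: (L_j (p ord_max)); rewrite mem_filter => /andP[/eqP].
Qed.

Theorem echelon_ramsey_holds k M C : echelon_ramsey k M C.
Proof.
elim: k M C => [|k IHk] M C; first exact: echelon_ramsey0.
apply: echelon_ramseyS => M'; elim: M' => [|M' IHM']; first exact: last_pivot_ramsey0.
exact: last_pivot_ramseyS.
Qed.

End Ramsey.

Theorem theorem5p4 (F : finFieldType) (k m r : nat) :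
  exists n : nat, forall c : 'M[F]_(n, k) -> 'I_r,
    exists R : 'M[F]_(n, m), in_E R /\
      exists chat : 'M[F]_k -> 'I_r,
        forall A : 'M[F]_(m, k), \rank A = k ->
          c (R *m A) = chat (tau (R *m A)).
Proof.
have [n ramsey] := echelon_ramsey_holds F k m {ffun 'M[F]_k -> 'I_r}.
exists n => c; have [R R_ech [c0 R_c0]] := ramsey (fun E => [ffun T => c (E *m T)]).
exists R; split; first exact: in_E_echelon.
exists (fun T => c0 (invmx T)) => A /echelon_decomposition[E [G [E_ech G_unit ->]]].
rewrite mulmxA tau_echelon_mul ?invmxK //; last exact: echelon_mul.
by rewrite -(R_c0 E E_ech) ffunE.
Qed.
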